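(* Let $m\ge 2$ be an integer and $c_0=1/m$. For every $a\in(0,c_0)$ and every $a',b\in(0,c_0)$, the map $\kappa\colon\{1,\ldots,2m\}\to D$ defined by $\kappa(i)=\alpha_i$ and $\kappa(i+m)=\beta_i$ for $i\in\{1,\ldots,m\}$ induces isomorphisms of subshifts $\Sigma_{HC}^+\simeq\Sigma_D^+$ and $\Sigma_{HC}\simeq\Sigma_D$. That is, the coordinatewise map $(\omega_n)_{n\in\mathbb Z^+}\mapsto(\kappa(\omega_n))_{n\in\mathbb Z^+}$ is a homeomorphism from $\Sigma_{HC}^+=\mathrm{cl}(\pi_a(X_a))$ onto $\Sigma_D^+$, and the coordinatewise map $(\omega_n)_{n\in\mathbb Z}\mapsto(\kappa(\omega_n))_{n\in\mathbb Z}$ is a homeomorphism from $\Sigma_{HC}=\mathrm{cl}(\pi_{a',b}(X_{a',b}))$ onto $\Sigma_D$.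
   Context: Let $m\ge2$, $c_0=1/m$. For $a\in(0,c_0)$ let $F_a\colon[0,1]\to[0,1]$ be $F_a(x)=\frac{x-(i-1)a}{a}$ on $[(i-1)a,ia)$, $i\in\{1,\ldots,m\}$, and $F_a(x)=\frac{x-ma}{1-ma}$ on $[ma,1]$. Define $\Omega_i^+\subset[0,1]^2$ by $\Omega_i^+=[(i-1)a,ia)\times[0,1]$ for $i\in\{1,\ldots,m\}$; $\Omega_i^+=[ma,1]\times[\frac{i-m-1}{m},\frac{i-m}{m})$ for $i\in\{m+1,\ldots,2m-1\}$; $\Omega_{2m}^+=[ma,1]\times[\frac{m-1}{m},1]$. Define $f_a\colon[0,1]^2\to[0,1]^2$ by $f_a(x,y)=(F_a(x),\frac{y}{m}+\frac{i-1}{m})$ on $\Omega_i^+$ for $i\le m$, and $f_a(x,y)=(F_a(x),my-i+m+1)$ on $\Omega_i^+$ for $i\ge m+1$. For $a,b\in(0,c_0)$ let $\Omega_i=\Omega_i^+\times[0,1]$ and define $f_{a,b}\colon[0,1]^3\to[0,1]^3$ by $f_{a,b}(x,y,z)=(f_a(x,y),(1-mb)z)$ on $\Omega_i$ for $i\le m$, and $f_{a,b}(x,y,z)=(f_a(x,y),bz+1-mb+b(i-m-1))$ on $\Omega_i$ for $i\ge m+1$; $f_{a,b}$ is a bijection of $[0,1]^3$. Let $X_a=\bigcap_{n\ge0}f_a^{-n}(\bigcup_{i=1}^{2m}\mathrm{int}(\Omega_i^+))$ and $X_{a,b}=\bigcap_{n\in\mathbb Z}f_{a,b}^{-n}(\bigcup_{i=1}^{2m}\mathrm{int}(\Omega_i))$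 (interiors in $\mathbb R^2$, $\mathbb R^3$). The coding map $\pi_a\colon X_a\to\{1,\ldots,2m\}^{\mathbb Z^+}$ sends $p$ to the unique $(\omega_n)$ with $f_a^n(p)\in\mathrm{int}(\Omega^+_{\omega_n})$ for all $n\ge0$; $\pi_{a,b}\colon X_{a,b}\to\{1,\ldots,2m\}^{\mathbb Z}$ sends $p$ to the unique $(\omega_n)$ with $f_{a,b}^n(p)\in\mathrm{int}(\Omega_{\omega_n})$ for all $n\in\mathbb Z$. Closures are taken in the product topologies. Dyck shift: $D=\{\alpha_1,\ldots,\alpha_m,\beta_1,\ldots,\beta_m\}$; consider the monoid with zero generated by $D$ and unit $1$ subject to $\alpha_i\cdot\beta_j=\delta_{i,j}$ (Kronecker delta), $0\cdot0=0$, $\gamma\cdot1=1\cdot\gamma=\gamma$, $\gamma\cdot 0=0\cdot\gamma=0$. For a finite word $\gamma_1\cdots\gamma_n$ over $D$ let $\mathrm{red}(\gamma_1\cdots\gamma_n)=\gamma_1\cdot\gamma_2\cdots\gamma_n$ in this monoid. Then $\Sigma_D^+=\{\omega\in D^{\mathbb Z^+}:\mathrm{red}(\omega_i\cdots\omega_j)\ne0\ \forall i<j\}$ and $\Sigma_D=\{\omega\in D^{\mathbb Z}:\mathrm{red}(\omega_i\cdots\omega_j)\neq0\ \forall i<j\}$. *)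

From HB Require Import structures.
From mathcomp Require Import all_boot all_order all_algebra.
From mathcomp Require Import all_classical all_reals all_analysis.

Set Implicit Arguments.
Unset Strict Implicit.
Unset Printing Implicit Defensive.

Import Order.TTheory GRing.Theory Num.Theory numFieldNormedType.Exports.
Local Open Scope classical_set_scope.
Local Open Scope ring_scope.

Section Dyn.
Variables (R : realType) (m : nat).

Definition OmegaP (a : R) (i : nat) : set (R * R) :=
  if ((1 <= i) && (i <= m))%N then
    [set p | (i.-1)%:R * a <= p.1 < i%:R * a /\ 0 <= p.2 <= 1]
  else if ((m.+1 <= i) && (i <= (2 * m).-1))%N then
    [set p | m%:R * a <= p.1 <= 1 /\
             (i - m.+1)%:R / m%:R <= p.2 < (i - m)%:R / m%:R]
  else if i == (2 * m)%N then
    [set p | m%:R * a <= p.1 <= 1 /\ (m.-1)%:R / m%:R <= p.2 <= 1]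
  else set0.

Definition Fbranch (a : R) (i : nat) (x : R) : R :=
  if (i <= m)%N then (x - (i.-1)%:R * a) / a
  else (x - m%:R * a) / (1 - m%:R * a).

Definition fa_branch (a : R) (i : nat) (p : R * R) : R * R :=
  (Fbranch a i p.1,
   if (i <= m)%N then p.2 / m%:R + (i.-1)%:R / m%:R
   else m%:R * p.2 - i%:R + m%:R + 1).

(* index i of the piece Omega_i^+ containing p (the pieces partition [0,1]^2) *)
Definition pieceP (a : R) (p : R * R) : nat := xget 0%N [set i | OmegaP a i p].

Definition f_a (a : R) (p : R * R) : R * R := fa_branch a (pieceP a p) p.

Definition UP (a : R) : set (R * R) :=
  \bigcup_(i in [set i : nat | (1 <= i <= 2 * m)%N]) interior (OmegaP a i).

Definition X_a (a : R) : set (R * R) :=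
  [set p | forall n : nat, UP a (iter n (f_a a) p)].

(* Symbols {1,...,2m} are encoded by 'I_(m+m): the ordinal k stands for k+1. *)
Definition HC_alph := discrete_topology 'I_(m + m).

Definition piX_a (a : R) : set {ptws nat -> HC_alph} :=
  [set w | exists p, X_a a p /\
     forall n : nat, interior (OmegaP a (w n).+1) (iter n (f_a a) p)].

Definition SigmaHC_plus (a : R) := closure (piX_a a).

Definition Omega3 (a : R) (i : nat) : set (R * R * R) :=
  [set p | OmegaP a i p.1 /\ 0 <= p.2 <= 1].

Definition piece3 (a : R) (p : R * R * R) : nat := xget 0%N [set i | Omega3 a i p].

Definition f_ab (a b : R) (p : R * R * R) : R * R * R :=
  let i := piece3 a p in
  (fa_branch a i p.1,
   if (i <= m)%N then (1 - m%:R * b) * p.2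
   else b * p.2 + 1 - m%:R * b + b * (i - m.+1)%:R).

Definition U3 (a : R) : set (R * R * R) :=
  \bigcup_(i in [set i : nat | (1 <= i <= 2 * m)%N]) interior (Omega3 a i).

(* X_{a,b} = \bigcap_{n in Z} f_{a,b}^{-n}(U): points with a full (two-sided)
   f_{a,b}-orbit staying in U. *)
Definition X_ab (a b : R) : set (R * R * R) :=
  [set p | exists q : int -> R * R * R,
     [/\ q 0 = p, forall n : int, q (n + 1) = f_ab a b (q n)
       & forall n : int, U3 a (q n)]].

Definition piX_ab (a b : R) : set {ptws int -> HC_alph} :=
  [set w | exists p, X_ab a b p /\
     exists q : int -> R * R * R,
     [/\ q 0 = p, forall n : int, q (n + 1) = f_ab a b (q n)
       & forall n : int, interior (Omega3 a (w n).+1) (q n)]].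

Definition SigmaHC (a b : R) := closure (piX_ab a b).

End Dyn.

Section Dyck.
Variable m : nat.

(* D = {alpha_1..alpha_m, beta_1..beta_m}: inl i = alpha_(i+1), inr i = beta_(i+1) *)
Definition Dletter := ('I_m + 'I_m)%type.
Definition D_alph := discrete_topology Dletter.

(* Elements of the Dyck monoid with zero: None = 0, Some s = the nonzero element
   with normal form (reversed word) s (normal forms: beta-word then alpha-word).
   Right multiplication by a generator, using alpha_i beta_j = delta_ij. *)
Definition dyck_step (x : option (seq Dletter)) (g : Dletter) :
    option (seq Dletter) :=
  match x with
  | None => None
  | Some s =>
      match g, s with
      | inr j, inl i :: s' => if i == j then Some s' else None
      | _, _ => Some (g :: s)
      end
  end.

Definition red (w : seq Dletter) : option (seq Dletter) :=
  foldl dyck_step (Some [::]) w.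

Definition SigmaD_plus : set {ptws nat -> D_alph} :=
  [set w | forall i j : nat, (i < j)%N ->
     red [seq w k | k <- iota i (j - i).+1] != None].

Definition SigmaD : set {ptws int -> D_alph} :=
  [set w | forall i j : int, i < j ->
     red [seq w (i + k%:Z) | k <- iota 0 (absz (j - i)).+1] != None].

Definition kappa (k : 'I_(m + m)) : Dletter := fintype.split k.

End Dyck.

Definition homeo_on {S T : topologicalType} (A : set S) (B : set T) (f : S -> T) :=
  [/\ set_bij A B f, {within A, continuous f} &
      exists g : T -> S, [/\ set_fun B A g, {within B, continuous g} &
                             forall y, B y -> f (g y) = y]].

From HB Require Import structures.
From mathcomp Require Import all_boot all_order all_algebra.
From mathcomp Require Import all_classical all_reals all_analysis.
From mathcomp Require Import ring lra zify.
Import Order.TTheory GRing.Theory Num.Theory numFieldNormedType.Exports.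
Local Open Scope classical_set_scope.
Local Open Scope ring_scope.
Set Implicit Arguments.
Unset Strict Implicit.
Unset Printing Implicit Defensive.

(* The [y]-coordinate of [f_a] is a stack of base-[m] digits: [alpha_i] pushes
   the digit [i - 1], while [beta_i] is only possible when the leading digit is
   [i - 1] and pops it.  Hence a pop always cancels the matching push, so every
   coding of an orbit is a Dyck sequence and [kappa] maps the codings into the
   closed set [Sigma_D].  Conversely every finite Dyck word is the coding of an
   orbit: the [x]-coordinate is pulled back from a fixed point of [F_a] through
   the inverse branches, the [y]-coordinate starts with the unmatched betas of
   the word on its stack, and in the invertible case the past is coded by
   [beta_1] at the fixed point of its [z]-branch.  Thus [Sigma_D] lies in the
   closure of the codings, and the letterwise bijection [kappa] is a
   homeomorphism for the product topologies. *)

Section DyckStack.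
Variable m : nat.
Local Notation letter := (Dletter m).

Definition stack_step (st : seq 'I_m) (g : letter) : seq 'I_m :=
  if g is inl c then c :: st else behead st.

Definition stack_run (st : seq 'I_m) (u : seq letter) : seq 'I_m :=
  foldl stack_step st u.

Definition pop_matches (st : seq 'I_m) (g : letter) : bool :=
  if g is inr j then ohead st == Some j else true.

Fixpoint pops_match (st : seq 'I_m) (u : seq letter) : bool :=
  if u is g :: u' then pop_matches st g && pops_match (stack_step st g) u'
  else true.

Lemma pops_match_cat st u1 u2 :
  pops_match st (u1 ++ u2) = pops_match st u1 && pops_match (stack_run st u1) u2.
Proof. by elim: u1 st => [|g u IH] st //=; rewrite IH andbA. Qed.

Lemma pops_match_rcons st u g :
  pops_match st (rcons u g) = pops_match st u && pop_matches (stack_run st u) g.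
Proof. by rewrite -cats1 pops_match_cat /= andbT. Qed.

Lemma stack_run_rcons st u g :
  stack_run st (rcons u g) = stack_step (stack_run st u) g.
Proof. exact: foldl_rcons. Qed.

(* A nonzero reduced word is stored reversed as [s]: its pending alphas
   (top of the stack first) followed by its unmatched betas. *)
Fixpoint pending_alphas (s : seq letter) : seq 'I_m :=
  if s is inl c :: s' then c :: pending_alphas s' else [::].

Definition unmatched_betas (s : seq letter) : seq 'I_m :=
  pmap (fun g => if g is inr j then Some j else None) s.

Lemma red_rcons (u : seq letter) g : red (rcons u g) = dyck_step (red u) g.
Proof. exact: foldl_rcons. Qed.

(* The unmatched betas of [red u] are exactly the pops of [u] that no push of
   [u] answers, so preloading them makes every pop of [u] succeed. *)
Lemma red_pops_match u s : red u = Some s -> forall tail,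
  pops_match (rev (unmatched_betas s) ++ tail) u /\
  stack_run (rev (unmatched_betas s) ++ tail) u = pending_alphas s ++ tail.
Proof.
elim/last_ind: u s => [|u g IH] s; first by case=> <-.
rewrite red_rcons; case E: (red u) => [s0|] //= Hs tail.
rewrite pops_match_rcons stack_run_rcons.
case: g Hs => [c|j] /=.
  by case=> <- /=; have [-> ->] := IH _ E tail.
case: s0 E => [|[c|j'] s0] E.
- case=> <- /=; have [-> ->] := IH _ E [:: j & tail]; by rewrite /= eqxx.
- case: eqP => // <- [<-]; have [-> ->] := IH _ E tail; by rewrite /= eqxx.
- case=> <- /=; rewrite rev_cons -cats1 -catA /=.
  have [-> ->] := IH _ E [:: j & tail]; by rewrite /= eqxx.
Qed.

End DyckStack.

Lemma strip_index_le (R : realFieldType) (s x : R) (k l : nat) : 0 < s ->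
  k%:R * s <= x -> x < l.+1%:R * s -> (k <= l)%N.
Proof.
move=> s0 lo hi; have : k%:R * s < l.+1%:R * s by apply: le_lt_trans hi.
by rewrite ltr_pM2r // ltr_nat ltnS.
Qed.

Section StackCode.
Variables (R : realType) (m : nat).
Hypothesis m_gt0 : (0 < m)%N.
Local Notation letter := (Dletter m).

(* The stack [d_1; ...; d_k] over the remainder [z] is the real number with
   base-[m] expansion 0.d_1...d_k followed by the digits of [z]. *)
Definition stack_code (st : seq 'I_m) (z : R) : R :=
  foldr (fun (d : 'I_m) y => (d%:R + y) / m%:R) z st.

Let m_pos : 0 < m%:R :> R. Proof. by rewrite ltr0n. Qed.

Lemma stack_code_in01 st z : 0 < z < 1 -> 0 < stack_code st z < 1.
Proof.
move=> z01; elim: st => [|d st /andP[y0 y1]] //=.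
have hd : (d%:R : R) + 1 <= m%:R by rewrite natr1 ler_nat ltn_ord.
have d0 : 0 <= (d%:R : R) by [].
apply/andP; split; first by apply: divr_gt0 => //; lra.
by rewrite ltr_pdivrMr //; lra.
Qed.

Lemma stack_code_cons_strip (j : 'I_m) st z : 0 < z < 1 ->
  j%:R / m%:R < stack_code (j :: st) z < j.+1%:R / m%:R.
Proof.
move=> /(stack_code_in01 st) /andP[c0 c1] /=.
by rewrite !ltr_pM2r ?invr_gt0 // -natr1 ltrDl c0 ltrD2l.
Qed.

Lemma stack_code_pop (j : 'I_m) st z :
  m%:R * stack_code (j :: st) z - j%:R = stack_code st z.
Proof. by rewrite /=; field; rewrite lt0r_neq0. Qed.

Lemma leading_digit_unique (c j : 'I_m) (y : R) : 0 < y < 1 ->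
  j%:R / m%:R <= (c%:R + y) / m%:R < j.+1%:R / m%:R -> c = j.
Proof.
move=> /(stack_code_cons_strip c [::]) /andP[c_lo c_hi] /andP[lo hi].
have m_inv : 0 < m%:R^-1 :> R by rewrite invr_gt0.
apply/val_inj/anti_leq.
by rewrite (strip_index_le m_inv lo c_hi) (strip_index_le m_inv (ltW c_lo) hi).
Qed.

Variables (y : nat -> R) (w : nat -> letter).
Hypothesis y_in01 : forall n, 0 < y n < 1.
Hypothesis y_push : forall n (c : 'I_m), w n = inl c ->
  y n.+1 = (c%:R + y n) / m%:R.
Hypothesis y_pop : forall n (j : 'I_m), w n = inr j ->
  j%:R / m%:R <= y n < j.+1%:R / m%:R /\ y n.+1 = m%:R * y n - j%:R.

(* A pop can only cancel the matching push, because the pushed digits lead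
   the base-[m] expansion of [y]. *)
Lemma red_stack_dynamics L : exists s, red [seq w k | k <- iota 0 L] = Some s /\
  exists2 z, 0 < z < 1 & y L = stack_code (pending_alphas s) z.
Proof.
elim: L => [|L [s [Hs [z z01 yL]]]]; first by exists [::]; split => //; exists (y 0).
rewrite -addn1 iotaD map_cat cats1 red_rcons Hs add0n addn1.
case E: (w L) => [c|j] /=.
  by exists (inl c :: s); split => //; exists z; rewrite // (y_push E) yL.
have [y_top y_next] := y_pop E.
case: s Hs yL => [|[c|j'] s] Hs yL; last 1 first.
- by exists [:: inr j, inr j' & s]; split => //; exists (y L.+1).
- by exists [:: inr j]; split => //; exists (y L.+1).
have code01 := stack_code_in01 (pending_alphas s) z01.
move: y_top; rewrite yL /= => /(leading_digit_unique code01) cj; subst c.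
rewrite eqxx; exists s; split => //; exists z => //.
by rewrite y_next yL stack_code_pop.
Qed.

Lemma stack_dynamics_red_neq0 L : red [seq w k | k <- iota 0 L] != None.
Proof. by have [s [-> _]] := red_stack_dynamics L. Qed.

End StackCode.

Lemma nbhs_itvoo (R : realType) (l u x : R) : l < x < u -> nbhs x [set t | l < t < u].
Proof.
by move=> lxu; apply: open_nbhs_nbhs; split; first by rewrite -set_itvoo; exact: itv_open.
Qed.

Lemma nbhs_itvcc_itvoo (R : realType) (l u x : R) :
  nbhs x [set t | l <= t <= u] -> l < x < u.
Proof.
move=> hx; have : [set` `[l, u]]° x by rewrite set_itvcc.
by rewrite interior_itv_bnd set_itvoo.
Qed.

Section ProductNbhs.
Variables (T U : topologicalType).

Lemma nbhs_section_fst (A : set (T * U)) (p : T * U) :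
  nbhs p A -> nbhs p.1 [set t | A (t, p.2)].
Proof.
case=> -[B C] /= [hB hC] sub; apply: filterS hB => t Bt.
by apply: sub; split => //; exact: nbhs_singleton hC.
Qed.

Lemma nbhs_section_snd (A : set (T * U)) (p : T * U) :
  nbhs p A -> nbhs p.2 [set u | A (p.1, u)].
Proof.
case=> -[B C] /= [hB hC] sub; apply: filterS hC => u Cu.
by apply: sub; split => //; exact: nbhs_singleton hB.
Qed.

End ProductNbhs.

Section DiscreteSequences.
Variables (I T : choiceType).
Local Notation seqs := {ptws I -> discrete_topology T}.

Lemma nbhs_coord (x : seqs) (t : I) : nbhs x [set w | w t = x t].
Proof.
exact: (@proj_continuous I (fun _ => discrete_topology T) t x _ (discrete_set1 (x t))).
Qed.

Lemma nbhs_window (x : seqs) (s : seq I) :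
  nbhs x [set w | forall i, i \in s -> w i = x i].
Proof.
have Fx : Filter (nbhs x) := nbhs_pfilter x.
elim: s => [|i s IH]; first by apply: (@nearW _ _ _ Fx) => w i; rewrite in_nil.
apply: (@filterS _ _ Fx _ _ _ (@filterI _ _ Fx _ _ (nbhs_coord x i) IH)) => w [wi ws] j.
by rewrite inE => /predU1P[->|/ws].
Qed.

Lemma closure_window (A : set seqs) (x : seqs) (s : seq I) :
  closure A x -> exists2 w, A w & forall i, i \in s -> w i = x i.
Proof. by move=> /(_ _ (nbhs_window x s)) [w [Aw wx]]; exists w. Qed.

Lemma cvg_coords (F : set_system seqs) (x : seqs) :
  Filter F -> (forall t, F [set w | w t = x t]) -> F --> x.
Proof.
move=> FF Fx; apply/(@pointwise_cvgP (discrete_topology I) (discrete_topology T)) => t.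
by apply/discrete_cvg; exact: Fx.
Qed.

Lemma closure_window_approx (A : set seqs) (x : seqs) (win : nat -> I -> Prop) :
  (forall t, \forall N \near \oo, win N t) ->
  (forall N, exists2 w, A w & forall t, win N t -> w t = x t) -> closure A x.
Proof.
move=> win_cover approx.
have {}approx N : exists w : seqs, A w /\ forall t, win N t -> w t = x t.
  by have [w Aw wx] := approx N; exists w.
have [w wP] := choice approx.
have w_cvg : w @ \oo --> x.
  apply: cvg_coords => t; apply: filterS (win_cover t) => N.
  exact: (wP N).2.
have w_near : \forall N \near \oo, closure A (w N).
  by apply: nearW => N; apply: subset_closure; exact: (wP N).1.
exact: (closed_cvg _ (@closed_closure _ A) w_near _ w_cvg).
Qed.

End DiscreteSequences.

Lemma continuous_ptws_comp (I T1 T2 : choiceType) (k : T1 -> T2) :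
  continuous (fun w : {ptws I -> discrete_topology T1} =>
                (k \o w : {ptws I -> discrete_topology T2})).
Proof.
move=> x; set P := fun w : {ptws I -> discrete_topology T1} =>
  (k \o w : {ptws I -> discrete_topology T2}).
have Fx : Filter (nbhs x) := nbhs_pfilter x.
apply: (@cvg_coords I T2 (P @ x) (P x) (fmap_filter P Fx)) => t.
by apply: (@filterS _ _ Fx _ _ _ (nbhs_coord x t)) => w wt; rewrite /P /= wt.
Qed.

Lemma homeo_relabel (I T1 T2 : choiceType) (k : T1 -> T2) (k' : T2 -> T1)
    (S : set {ptws I -> discrete_topology T1}) (D : set {ptws I -> discrete_topology T2}) :
  cancel k k' -> cancel k' k ->
  (forall w, S w -> D (k \o w)) -> closed D ->
  (forall y, D y -> closure S (k' \o y)) ->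
  homeo_on (closure S) D (fun w n => k (w n) : discrete_topology T2).
Proof.
move=> kK k'K SD clD DS.
have k_cont := @continuous_ptws_comp I _ _ k.
split; [split| |].
- move=> w Sw; apply: clD => B /(k_cont w) /Sw [s [Ss Bs]].
  by exists (k \o s); split => //; exact: SD.
- move=> w1 w2 _ _ /= e; apply/funext => n.
  by rewrite -[w1 n]kK -[w2 n]kK (congr1 (fun f => f n) e).
- move=> y Dy; exists (k' \o y); first exact: DS.
  by apply/funext => n /=; rewrite k'K.
- exact: continuous_subspaceT.
- exists (fun y : {ptws I -> discrete_topology T2} =>
            k' \o y : {ptws I -> discrete_topology T1}); split.
  + by move=> y /DS.
  + exact/continuous_subspaceT/continuous_ptws_comp.
  + by move=> y _; apply/funext => n /=; rewrite k'K.
Qed.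

Lemma centered_window_index (N : nat) (t : int) : (`|t| <= N)%N ->
  exists2 k : nat, t + N.+1%:Z = k%:Z & (k < (N.+1 + N.+1).+1)%N.
Proof. by move=> tN; exists (absz (t + N.+1%:Z)); [rewrite gez0_abs | ]; lia. Qed.

Lemma closed_SigmaD_plus m : closed (@SigmaD_plus m).
Proof.
move=> w /closure_window cw i j ij.
have [w' Dw' w'w] := cw (iota i (j - i).+1).
have <- : map w' (iota i (j - i).+1) = map w (iota i (j - i).+1) by apply/eq_in_map.
exact: Dw'.
Qed.

Lemma closed_SigmaD m : closed (@SigmaD m).
Proof.
move=> w /closure_window cw i j ij.
have [w' Dw' w'w] := cw [seq i + k%:Z | k <- iota 0 (absz (j - i)).+1].
have := Dw' i j ij; congr (red _ != None); apply/eq_in_map => k k_in.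
by apply: w'w; exact: (map_f (fun k : nat => i + k%:Z) k_in).
Qed.

Section HorseshoeCoding.
Variables (R : realType) (m : nat) (a b : R).
Hypothesis m_ge2 : (2 <= m)%N.
Hypothesis a_range : 0 < a < m%:R^-1.

Let m_gt0 : (0 < m)%N. Proof. exact: leq_trans m_ge2. Qed.
Let m_pos : 0 < m%:R :> R. Proof. by rewrite ltr0n. Qed.
Let m_inv : 0 < m%:R^-1 :> R. Proof. by rewrite invr_gt0. Qed.
Let a_pos : 0 < a. Proof. by case/andP: a_range. Qed.
Let ma_lt1 : m%:R * a < 1.
Proof. by case/andP: a_range => _; rewrite -(ltr_pM2l m_pos) mulfV ?lt0r_neq0. Qed.
Let two_a_lt1 : 2 * a < 1.
Proof. by apply: le_lt_trans ma_lt1; rewrite ler_pM2r // ler_nat. Qed.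
Let half_in01 : 0 < (2^-1 : R) < 1. Proof. by apply/andP; split; lra. Qed.

Lemma OmegaP_index i p : OmegaP m a i p -> exists k : 'I_(m + m), i = k.+1.
Proof.
move=> Op; have [i0 im] : (0 < i)%N /\ (i <= m + m)%N.
  move: Op; rewrite /OmegaP.
  case: ifP => [/andP[i1 i2] _|_]; first lia.
  case: ifP => [/andP[i1 i2] _|_]; first lia.
  by case: ifP => // /eqP -> _; lia.
have i_lt : (i.-1 < m + m)%N by rewrite prednK.
by exists (Ordinal i_lt); rewrite /= prednK.
Qed.

Lemma OmegaP_alphaE (c : 'I_m) : OmegaP m a c.+1 =
  [set p | c%:R * a <= p.1 < c.+1%:R * a /\ 0 <= p.2 <= 1].
Proof. by rewrite /OmegaP ltn_ord. Qed.

Lemma OmegaP_betaE (j : 'I_m) : OmegaP m a (m + j).+1 =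
  [set p | m%:R * a <= p.1 <= 1 /\ j%:R / m%:R <= p.2 /\
           (if (j.+1 < m)%N then p.2 < j.+1%:R / m%:R else p.2 <= 1)].
Proof.
have j_lt := ltn_ord j.
rewrite /OmegaP (_ : ((m + j).+1 <= m)%N = false) ?andbF /=; last by lia.
rewrite (_ : (m < (m + j).+1 <= (2 * m).-1)%N = (j.+1 < m)%N); last by lia.
case: ifP => [_|/negbT j_last]; first rewrite subSS addKn -addnS addKn.
2: have -> : ((m + j).+1 == 2 * m)%N by apply/eqP; lia.
2: have -> : m.-1 = j by lia.
all: apply/funext => p; apply/propext.
all: by split=> [[? /andP[? ?]]|[? [? ?]]]; split => //; apply/andP.
Qed.

Lemma OmegaP_index_unique i j p : OmegaP m a i p -> OmegaP m a j p -> i = j.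
Proof.
have alpha_beta (c e : 'I_m) : OmegaP m a c.+1 p -> ~ OmegaP m a (m + e).+1 p.
  rewrite OmegaP_alphaE OmegaP_betaE => -[/andP[_ hi] _] [/andP[lo _] _].
  have : c.+1%:R * a <= m%:R * a by rewrite ler_pM2r // ler_nat ltn_ord.
  by move=> /(lt_le_trans hi) /(le_lt_trans lo); rewrite ltxx.
have beta_le (e e' : 'I_m) :
    OmegaP m a (m + e).+1 p -> OmegaP m a (m + e').+1 p -> (e <= e')%N.
  rewrite !OmegaP_betaE => -[_ [lo _]] [_ [_]].
  case: ifP => [_ hi|]; first exact: strip_index_le m_inv lo hi.
  by move=> /negbT; rewrite -leqNgt => /(leq_trans (ltn_ord e)).
move=> Oi Oj; have [k ik] := OmegaP_index Oi; have [l jl] := OmegaP_index Oj.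
rewrite ik jl in Oi Oj *; congr _.+1.
case: (splitP k) => [c|e] -> in Oi *; case: (splitP l) => [c'|e'] -> in Oj *.
- move: Oi Oj; rewrite !OmegaP_alphaE => -[/andP[lo hi] _] [/andP[lo' hi'] _].
  by apply/anti_leq; rewrite (strip_index_le a_pos lo hi') (strip_index_le a_pos lo' hi).
- by have := alpha_beta _ _ Oi Oj.
- by have := alpha_beta _ _ Oj Oi.
- by congr (m + _); apply/anti_leq; rewrite !(beta_le _ _ Oi Oj, beta_le _ _ Oj Oi).
Qed.

Lemma f_a_OmegaP i p : OmegaP m a i p -> f_a m a p = fa_branch m a i p.
Proof.
move=> Op; rewrite /f_a /pieceP.
by rewrite -(OmegaP_index_unique Op (@xgetI _ 0%N [set i | OmegaP m a i p] i Op)).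
Qed.

Definition z_branch (i : nat) (z : R) : R :=
  if (i <= m)%N then (1 - m%:R * b) * z else b * z + 1 - m%:R * b + b * (i - m.+1)%:R.

Lemma f_ab_Omega3 i p : Omega3 m a i p ->
  f_ab m a b p = (fa_branch m a i p.1, z_branch i p.2).
Proof.
move=> Op; rewrite /f_ab /piece3.
have [Op' _] := @xgetI _ 0%N [set i | Omega3 m a i p] i Op.
by rewrite -(OmegaP_index_unique Op.1 Op').
Qed.

Lemma OmegaP_y01 i q : OmegaP m a i q -> 0 <= q.2 <= 1.
Proof.
move=> Oq; have [k ik] := OmegaP_index Oq; move: Oq; rewrite ik.
case: (splitP k) => [c|j] ->; first by rewrite OmegaP_alphaE => -[].
rewrite OmegaP_betaE => -[_ [y_lo y_hi]].
apply/andP; split; first by apply: le_trans y_lo; rewrite divr_ge0.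
case: ifP y_hi => // _ /ltW /le_trans; apply.
by rewrite ler_pdivrMr // mul1r ler_nat ltn_ord.
Qed.

Lemma interior_OmegaP_y01 i q : interior (OmegaP m a i) q -> 0 < q.2 < 1.
Proof.
move=> /nbhs_section_snd hq; apply: nbhs_itvcc_itvoo.
by apply: filterS hq => t; exact: OmegaP_y01.
Qed.

Lemma interior_Omega3_fst i q : interior (Omega3 m a i) q -> interior (OmegaP m a i) q.1.
Proof. by move=> /nbhs_section_fst; apply: filterS => x []. Qed.

Lemma interior_Omega3 i p z : interior (OmegaP m a i) p -> 0 < z < 1 ->
  interior (Omega3 m a i) (p, z).
Proof.
move=> hp hz; exists (OmegaP m a i, [set t | 0 < t < 1]).
  by split; last exact: nbhs_itvoo.
by move=> [q t] /= [Oq /andP[t0 t1]]; split; rewrite ?ltW.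
Qed.

Lemma interior_OmegaP_alpha (c : 'I_m) p :
  c%:R * a < p.1 < c.+1%:R * a -> 0 < p.2 < 1 -> interior (OmegaP m a c.+1) p.
Proof.
move=> hx hy; exists ([set x | c%:R * a < x < c.+1%:R * a], [set y | 0 < y < 1]).
  by split; exact: nbhs_itvoo.
move=> [x y] /= [/andP[x0 x1] /andP[y0 y1]].
by rewrite OmegaP_alphaE /= (ltW x0) x1 (ltW y0) (ltW y1).
Qed.

Lemma interior_OmegaP_beta (j : 'I_m) p : m%:R * a < p.1 < 1 ->
  j%:R / m%:R < p.2 < j.+1%:R / m%:R -> interior (OmegaP m a (m + j).+1) p.
Proof.
move=> hx hy.
exists ([set x | m%:R * a < x < 1], [set y | j%:R / m%:R < y < j.+1%:R / m%:R]).
  by split; exact: nbhs_itvoo.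
move=> [x y] /= [/andP[x0 x1] /andP[y0 y1]].
rewrite OmegaP_betaE /= (ltW x0) (ltW x1) (ltW y0); split => //; split => //.
case: ifP => // _; apply: le_trans (ltW y1) _.
by rewrite ler_pdivrMr // mul1r ler_nat ltn_ord.
Qed.

Lemma interior_OmegaP_beta_y (j : 'I_m) p : interior (OmegaP m a (m + j).+1) p ->
  j%:R / m%:R <= p.2 < j.+1%:R / m%:R.
Proof.
move=> hp; have /andP[_ y1] := interior_OmegaP_y01 hp.
move: (interior_subset hp); rewrite OmegaP_betaE => -[_ [-> /=]].
case: ltnP => // j_last _; rewrite (_ : j.+1 = m) ?divff ?lt0r_neq0 //.
by apply/anti_leq; rewrite j_last ltn_ord.
Qed.

Lemma fa_branch_alpha_y (c : 'I_m) p : (fa_branch m a c.+1 p).2 = (c%:R + p.2) / m%:R.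
Proof. by rewrite /fa_branch /= ltn_ord mulrDl addrC. Qed.

Lemma fa_branch_beta_y (j : 'I_m) p : (fa_branch m a (m + j).+1 p).2 = m%:R * p.2 - j%:R.
Proof.
rewrite /fa_branch /= (_ : ((m + j).+1 <= m)%N = false); last by rewrite ltnNge leq_addr.
by rewrite -[(m + j).+1]addn1 !natrD; ring.
Qed.

Lemma orbit_coding_red_neq0 (P : nat -> R * R) (k : nat -> 'I_(m + m)) :
  (forall n, interior (OmegaP m a (k n).+1) (P n)) ->
  (forall n, P n.+1 = fa_branch m a (k n).+1 (P n)) ->
  forall L, red [seq kappa (k n) | n <- iota 0 L] != None.
Proof.
move=> P_int P_next; apply: (@stack_dynamics_red_neq0 R m m_gt0 (fun n => (P n).2)).
- by move=> n; exact: interior_OmegaP_y01 (P_int n).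
- move=> n c; rewrite /kappa P_next; case: splitP => // c' kn [<-].
  by rewrite kn fa_branch_alpha_y.
- move=> n j; rewrite /kappa P_next; case: splitP => // j' kn [<-].
  rewrite kn fa_branch_beta_y; split => //.
  by apply: interior_OmegaP_beta_y; rewrite -kn; exact: P_int.
Qed.

Lemma piX_a_dyck w : @piX_a R m a w -> SigmaD_plus (fun n => kappa (w n)).
Proof.
case=> p [_ w_int] i j ij; rewrite -{1}(addn0 i) iotaDl -map_comp.
apply: (orbit_coding_red_neq0 (P := fun n => iter (i + n) (f_a m a) p)
                              (k := fun n => w (i + n)%N)) => [n|n].
  exact: w_int.
by rewrite /= addnS iterS (f_a_OmegaP (interior_subset (w_int _))).
Qed.

Lemma piX_ab_dyck w : @piX_ab R m a b w -> SigmaD (fun n => kappa (w n)).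
Proof.
case=> _ [_ [q [_ q_next q_int]]] i j ij.
apply: (orbit_coding_red_neq0 (P := fun n => (q (i + n%:Z)).1)
                              (k := fun n => w (i + n%:Z))) => [n|n].
  exact: interior_Omega3_fst (q_int _).
rewrite /= -addn1 PoszD addrA q_next.
by rewrite (f_ab_Omega3 (interior_subset (q_int _))).
Qed.

Lemma ord_index_range (k : 'I_(m + m)) : (1 <= k.+1 <= 2 * m)%N.
Proof. by rewrite /= mul2n -addnn ltn_ord. Qed.

Lemma iter_in01 (f : R -> R) : (forall x, 0 < x < 1 -> 0 < f x < 1) ->
  forall n x, 0 < x < 1 -> 0 < iter n f x < 1.
Proof. by move=> f01; elim=> [|n IH] x x01 //=; apply/f01/IH. Qed.

Definition inv_branch (g : Dletter m) (x : R) : R :=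
  if g is inl c then a * (c%:R + x) else m%:R * a + (1 - m%:R * a) * x.

Lemma inv_branch_strip (g : Dletter m) x : 0 < x < 1 ->
  if g is inl c then c%:R * a < inv_branch g x < c.+1%:R * a
  else m%:R * a < inv_branch g x < 1.
Proof.
move=> /andP[x0 x1]; have ma0 : 0 < 1 - m%:R * a by rewrite subr_gt0.
have ax : 0 < a * x by rewrite mulr_gt0.
have ax1 : 0 < a * (1 - x) by rewrite mulr_gt0 // subr_gt0.
have bx : 0 < (1 - m%:R * a) * x by rewrite mulr_gt0.
have bx1 : 0 < (1 - m%:R * a) * (1 - x) by rewrite mulr_gt0 // subr_gt0.
by case: g => [c|j] /=; apply/andP; split; rewrite ?mulrDr ?(mulrC a); lra.
Qed.

Lemma inv_branch_in01 (g : Dletter m) x : 0 < x < 1 -> 0 < inv_branch g x < 1.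
Proof.
move=> /(inv_branch_strip g); case: g => [c|j] /andP[lo hi]; apply/andP; split => //.
- by apply: le_lt_trans lo; rewrite mulr_ge0 // ltW.
- apply: (lt_le_trans hi); apply: le_trans (ltW ma_lt1).
  by rewrite ler_pM2r // ler_nat.
- by apply: le_lt_trans lo; rewrite mulr_ge0 // ltW.
Qed.

Lemma Fbranch_inv_branch (g : Dletter m) x :
  Fbranch m a (unsplit g).+1 (inv_branch g x) = x.
Proof.
rewrite /Fbranch; case: g => [c|j] /=; first by rewrite ltn_ord; field; rewrite lt0r_neq0.
rewrite ltnNge leq_addr /=; field.
by rewrite subr_eq0 gt_eqF.
Qed.

Definition alpha2 : 'I_m := Ordinal m_ge2.

(* The branch of [alpha_1] fixes [0], on the boundary of its strip, while the
   branch of [alpha_2] fixes [a / (1 - a)] inside its strip; hence [m >= 2]. *)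
Definition x_fix : R := a / (1 - a).

Lemma x_fix_in01 : 0 < x_fix < 1.
Proof.
have := two_a_lt1; have := a_pos => a0 a2.
have a1 : 0 < 1 - a by lra.
by rewrite /x_fix divr_gt0 //= ltr_pdivrMr // mul1r; lra.
Qed.

Lemma inv_branch_x_fix : inv_branch (inl alpha2) x_fix = x_fix.
Proof.
have := two_a_lt1; have := a_pos => a0 a2.
by rewrite /inv_branch /x_fix /=; field; rewrite subr_eq0 gt_eqF //; lra.
Qed.

Section Realization.
Variables (u : nat -> Dletter m) (L : nat) (st0 : seq 'I_m).
Hypothesis u_tail : forall n, (L <= n)%N -> u n = inl alpha2.
Hypothesis u_match : pops_match st0 [seq u n | n <- iota 0 L].

Definition orbit_x n := foldr inv_branch x_fix [seq u i | i <- iota n (L - n)].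
Definition orbit_stack n := stack_run st0 [seq u i | i <- iota 0 n].
Definition orbit_y n : R := stack_code (orbit_stack n) 2^-1.

Lemma orbit_x_in01 n : 0 < orbit_x n < 1.
Proof.
rewrite /orbit_x; elim: (map _ _) => [|g s IH] /=; first exact: x_fix_in01.
exact: inv_branch_in01.
Qed.

Lemma orbit_x_next n : orbit_x n = inv_branch (u n) (orbit_x n.+1).
Proof.
rewrite /orbit_x; have [nL|Ln] := ltnP n L; first by rewrite -(subnSK nL).
have /eqP -> : (L - n == 0)%N by rewrite subn_eq0.
have /eqP -> : (L - n.+1 == 0)%N by rewrite subn_eq0 leqW.
by rewrite /= u_tail // inv_branch_x_fix.
Qed.

Lemma orbit_y_in01 n : 0 < orbit_y n < 1.
Proof. exact: (stack_code_in01 m_gt0 (orbit_stack n) half_in01). Qed.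

Lemma orbit_stack_next n : orbit_stack n.+1 = stack_step (orbit_stack n) (u n).
Proof. by rewrite /orbit_stack -addn1 iotaD map_cat cats1 stack_run_rcons. Qed.

Lemma orbit_stack_pop n j : u n = inr j -> exists st, orbit_stack n = j :: st.
Proof.
move=> unj; have nL : (n < L)%N by rewrite ltnNge; apply/negP => /u_tail; rewrite unj.
move: u_match; rewrite -(subnKC (ltnW nL)) iotaD map_cat pops_match_cat add0n.
have [k ->] : exists k, (L - n = k.+1)%N by exists (L - n).-1; rewrite prednK // subn_gt0.
rewrite /= unj -/(orbit_stack n) => /andP[_ /andP[]].
by case: (orbit_stack n) => [|j' st] //= /eqP [->] _; exists st.
Qed.

Lemma orbit_y_beta n j : u n = inr j -> j%:R / m%:R < orbit_y n < j.+1%:R / m%:R.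
Proof.
by move=> /orbit_stack_pop [st st_eq]; rewrite /orbit_y st_eq stack_code_cons_strip.
Qed.

Lemma orbit_y_next n x : (fa_branch m a (unsplit (u n)).+1 (x, orbit_y n)).2 = orbit_y n.+1.
Proof.
rewrite /orbit_y orbit_stack_next; case E: (u n) => [c|j].
  exact: fa_branch_alpha_y.
have [st ->] := orbit_stack_pop E.
by rewrite (fa_branch_beta_y j) stack_code_pop.
Qed.

Lemma orbit_step n :
  interior (OmegaP m a (unsplit (u n)).+1) (orbit_x n, orbit_y n) /\
  f_a m a (orbit_x n, orbit_y n) = (orbit_x n.+1, orbit_y n.+1).
Proof.
have int_n : interior (OmegaP m a (unsplit (u n)).+1) (orbit_x n, orbit_y n).
  have := inv_branch_strip (u n) (orbit_x_in01 n.+1); rewrite -orbit_x_next.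
  case E: (u n) => [c|j] /= x_strip.
    by apply: interior_OmegaP_alpha; [exact: x_strip | exact: orbit_y_in01].
  by apply: interior_OmegaP_beta; [exact: x_strip | exact: orbit_y_beta].
split => //; rewrite (f_a_OmegaP (interior_subset int_n)).
rewrite [LHS]surjective_pairing orbit_y_next; congr pair.
by rewrite {1}orbit_x_next; exact: Fbranch_inv_branch.
Qed.

Lemma orbit_iter n : iter n (f_a m a) (orbit_x 0, orbit_y 0) = (orbit_x n, orbit_y n).
Proof. by elim: n => [|n IH] //=; rewrite IH (orbit_step n).2. Qed.

Lemma orbit_coding : @piX_a R m a (fun n => unsplit (u n)).
Proof.
exists (orbit_x 0, orbit_y 0); split => n; rewrite orbit_iter; last exact: (orbit_step n).1.
by exists (unsplit (u n)).+1; [exact: ord_index_range | exact: (orbit_step n).1].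
Qed.

Section TwoSided.
Hypothesis b_range : 0 < b < m%:R^-1.

Lemma z_branch_in01 (k : 'I_(m + m)) z : 0 < z < 1 -> 0 < z_branch k.+1 z < 1.
Proof.
have k_sub : (k.+1 - m.+1 < m)%N by rewrite subSS ltn_psubLR // ltn_ord.
move=> /andP[z0 z1]; have [b0 bm] := andP b_range.
have mb1 : m%:R * b < 1 by rewrite -(ltr_pM2l m_pos) mulfV ?lt0r_neq0 in bm.
have bz : 0 < b * z by rewrite mulr_gt0.
have bz1 : 0 < b * (1 - z) by rewrite mulr_gt0 // subr_gt0.
rewrite /z_branch; case: ifP => [_|/negbT km].
  have mbz : 0 < m%:R * b * z by rewrite !mulr_gt0.
  apply/andP; split; first by apply: mulr_gt0; rewrite // subr_gt0.
  by rewrite mulrBl mul1r; lra.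
have kj : ((k.+1 - m.+1)%:R : R) + 1 <= m%:R.
  by rewrite natr1 ler_nat.
have bkj : 0 <= b * (m%:R - ((k.+1 - m.+1)%:R + 1)) by rewrite mulr_ge0 ?subr_ge0 // ltW.
have bk : 0 <= b * (k.+1 - m.+1)%:R by rewrite mulr_ge0 // ltW.
move: bkj; rewrite mulrBr mulrDr mulr1 (mulrC b m%:R) => bkj.
by apply/andP; split; lra.
Qed.

Definition beta1 : Dletter m := inr (Ordinal (ltnW m_ge2)).

(* The fixed point of the [z]-branch of [beta_1], where the backward half of
   the two-sided orbit rests. *)
Definition z_fix : R := (1 - m%:R * b) / (1 - b).

Lemma z_fix_in01 : 0 < z_fix < 1.
Proof.
have [b0 bm] := andP b_range.
have mb1 : m%:R * b < 1 by rewrite -(ltr_pM2l m_pos) mulfV ?lt0r_neq0 in bm.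
have b_mb : b < m%:R * b by rewrite ltr_pMl // ltr1n.
have b1 : 0 < 1 - b by lra.
rewrite /z_fix; apply/andP; split; first by apply: divr_gt0; lra.
by rewrite ltr_pdivrMr // mul1r; lra.
Qed.

Lemma z_branch_z_fix : z_branch (unsplit beta1).+1 z_fix = z_fix.
Proof.
have [b0 bm] := andP b_range; have b1 : 1 - b != 0.
  by rewrite subr_eq0 gt_eqF // (lt_trans bm) // invf_lt1 ?ltr1n.
by rewrite /z_branch /= addn0 ltnn subnn mulr0 addr0 /z_fix; field.
Qed.

Fixpoint orbit_z n : R :=
  if n is n'.+1 then z_branch (unsplit (u n')).+1 (orbit_z n') else z_fix.

Definition orbit3 n := (orbit_x n, orbit_y n, orbit_z n).

Definition back_orbit3 n :=
  (iter n (inv_branch beta1) (orbit_x 0), iter n (fun y => y / m%:R) (orbit_y 0), z_fix).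

Lemma orbit_z_in01 n : 0 < orbit_z n < 1.
Proof. by elim: n => [|n IH] /=; [exact: z_fix_in01 | exact: z_branch_in01]. Qed.

Lemma orbit3_step n :
  interior (Omega3 m a (unsplit (u n)).+1) (orbit3 n) /\
  f_ab m a b (orbit3 n) = orbit3 n.+1.
Proof.
have [int_n f_n] := orbit_step n.
have int3 := interior_Omega3 int_n (orbit_z_in01 n).
split => //; rewrite (f_ab_Omega3 (interior_subset int3)).
by rewrite -(f_a_OmegaP (interior_subset int_n)) f_n.
Qed.

Lemma back_orbit3_step n :
  interior (Omega3 m a (unsplit beta1).+1) (back_orbit3 n.+1) /\
  f_ab m a b (back_orbit3 n.+1) = back_orbit3 n.
Proof.
rewrite /back_orbit3 !iterS.
set x := iter n _ (orbit_x 0); set y := iter n _ (orbit_y 0).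
have x01 : 0 < x < 1 by apply: iter_in01 (orbit_x_in01 0) => ?; exact: inv_branch_in01.
have div_m01 (t : R) : 0 < t < 1 -> 0 < t / m%:R < 1.
  move=> /andP[t0 t1]; apply/andP; split; first by apply: divr_gt0.
  by rewrite ltr_pdivrMr // mul1r (lt_le_trans t1) // ler1n.
have y01 : 0 < y < 1 by apply: iter_in01 (orbit_y_in01 0) => ?; exact: div_m01.
have int2 : interior (OmegaP m a (unsplit beta1).+1) (inv_branch beta1 x, y / m%:R).
  apply: interior_OmegaP_beta; first exact: (inv_branch_strip beta1 x01).
  case/andP: y01 => y0 y1; rewrite /= mul0r; apply/andP; split; first by apply: divr_gt0.
  by rewrite ltr_pM2r // invr_gt0.
have int3 := interior_Omega3 int2 z_fix_in01.
split => //; rewrite (f_ab_Omega3 (interior_subset int3)) z_branch_z_fix.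
rewrite [fa_branch _ _ _ _]surjective_pairing fa_branch_beta_y; congr (_, _, _).
  exact: Fbranch_inv_branch.
by rewrite /= subr0 mulrCA mulfV ?lt0r_neq0 // mulr1.
Qed.

Definition two_sided_orbit (r : int) :=
  match r with Posz n => orbit3 n | Negz n => back_orbit3 n.+1 end.

Definition two_sided_letter (r : int) : Dletter m :=
  match r with Posz n => u n | Negz _ => beta1 end.

Lemma two_sided_orbit_next r : two_sided_orbit (r + 1) = f_ab m a b (two_sided_orbit r).
Proof.
case: r => [n|[|n]].
- by rewrite -PoszD addn1 /= (orbit3_step n).2.
- by rewrite /= (back_orbit3_step 0).2.
- have -> : Negz n.+1 + 1 = Negz n by rewrite !NegzE -[n.+2]addn1 PoszD opprD addrNK.
  by rewrite /= (back_orbit3_step n.+1).2.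
Qed.

Lemma two_sided_orbit_interior r :
  interior (Omega3 m a (unsplit (two_sided_letter r)).+1) (two_sided_orbit r).
Proof. by case: r => n; [exact: (orbit3_step n).1 | exact: (back_orbit3_step n).1]. Qed.

Lemma two_sided_coding : @piX_ab R m a b (fun r => unsplit (two_sided_letter r)).
Proof.
have next := two_sided_orbit_next; have int := two_sided_orbit_interior.
exists (two_sided_orbit 0); split; exists two_sided_orbit; split => // r.
by exists (unsplit (two_sided_letter r)).+1; [exact: ord_index_range | exact: int].
Qed.

End TwoSided.

End Realization.

Lemma piX_ab_shift w (s : int) :
  @piX_ab R m a b w -> @piX_ab R m a b (fun n => w (n + s)).
Proof.
case=> _ [_ [q [_ q_next q_int]]].
pose q' n := q (n + s).
have q'_next n : q' (n + 1) = f_ab m a b (q' n) by rewrite /q' addrAC q_next.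
have q'_int n : interior (Omega3 m a (w (n + s)).+1) (q' n) by exact: q_int.
exists (q' 0); split; exists q'; split => // n.
by exists (w (n + s)).+1; [exact: ord_index_range | exact: q'_int].
Qed.

Lemma SigmaD_plus_closure_piX_a y :
  SigmaD_plus y -> closure (@piX_a R m a) (fun n => unsplit (y n)).
Proof.
move=> Dy; apply: (closure_window_approx (win := fun N t => (t <= N)%N)) => [t|N].
  exact: nbhs_infty_ge.
have := Dy 0%N N.+1 (ltn0Sn _); rewrite subn0; case E: red => [s|] // _.
have [s_match _] := red_pops_match E [::]; rewrite cats0 in s_match.
pose u n := if (n < N.+2)%N then y n else inl alpha2.
exists (fun n => unsplit (u n)) => [|t tN]; last by rewrite /u ltnS leqW.
apply: (orbit_coding (L := N.+2) (st0 := rev (unmatched_betas s))).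
  by move=> n n_ge; rewrite /u ltnNge n_ge.
suff -> : [seq u n | n <- iota 0 N.+2] = [seq y n | n <- iota 0 N.+2] by [].
by apply/eq_in_map => n; rewrite mem_iota /u => /andP[_ ->].
Qed.

Lemma SigmaD_closure_piX_ab (b_range : 0 < b < m%:R^-1) y :
  SigmaD y -> closure (@piX_ab R m a b) (fun n => unsplit (y n)).
Proof.
move=> Dy; apply: (closure_window_approx (win := fun N t => (`|t| <= N)%N)) => [t|N].
  exact: nbhs_infty_ge.
pose M := N.+1; pose L := (M + M).+1.
have M_lt : - M%:Z < M%:Z by apply: (@lt_trans _ _ 0); rewrite ?oppr_lt0 ltz_nat.
have := Dy _ _ M_lt; rewrite opprK -PoszD.
case E: red => [s|] // _.
have [s_match _] := red_pops_match E [::]; rewrite cats0 in s_match.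
pose u k := if (k < L)%N then y (- M%:Z + k%:Z) else inl alpha2.
exists (fun n => unsplit (two_sided_letter u (n + M%:Z))) => [|t tN].
  apply: (piX_ab_shift (w := fun r => unsplit (two_sided_letter u r))).
  apply: (two_sided_coding (L := L) (st0 := rev (unmatched_betas s))) => //.
    by move=> n n_ge; rewrite /u ltnNge n_ge.
  suff -> : [seq u n | n <- iota 0 L] = [seq y (- M%:Z + n%:Z) | n <- iota 0 L] by [].
  by apply/eq_in_map => n; rewrite mem_iota /u => /andP[_ ->].
have [k tk kL] := centered_window_index tN.
by rewrite tk /= /u kL -tk addrCA addNr addr0.
Qed.

End HorseshoeCoding.

Theorem theoremA (R : realType) (m : nat) (hm : (2 <= m)%N)
  (a a' b : R)
  (ha : 0 < a < m%:R^-1) (ha' : 0 < a' < m%:R^-1) (hb : 0 < b < m%:R^-1) :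
  homeo_on (@SigmaHC_plus R m a) (@SigmaD_plus m)
    (fun (w : {ptws nat -> HC_alph m}) (n : nat) => @kappa m (w n) : D_alph m)
  /\
  homeo_on (@SigmaHC R m a' b) (@SigmaD m)
    (fun (w : {ptws int -> HC_alph m}) (n : int) => @kappa m (w n) : D_alph m).
Proof.
split; apply: (homeo_relabel (@splitK m m) (@unsplitK m m)).
- exact: piX_a_dyck hm ha.
- exact: closed_SigmaD_plus.
- exact: SigmaD_plus_closure_piX_a.
- exact: piX_ab_dyck hm ha'.
- exact: closed_SigmaD.
- exact: SigmaD_closure_piX_ab.
Qed.
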